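(* For $t\in\mathbb N\cup\{\infty\}$ and any nonroot vertex $u$, let $a^t_u(\eta,S)\in\{0,1\}$ be the indicator that $u$ is visited by some frog by time $t$ in the frog model $(\eta,S)$, and let $a^t(\eta,S)=\sum_{v\neq\emptyset}a^t_v(\eta,S)$ be the total number of nonroot vertices visited by time $t$. Then $a^t_u$ and $a^t$ are continuous icv statistics and continuous pgf statistics.
   Context: Frog model: $G$ countable with root $\emptyset$; $(\eta,S)$ consists of counts $\eta(v)\in\{0,1,\dots\}$ for $v\ne\emptyset$ and paths $S_\cdot(v,i)$ with $S_0(v,i)=v$. One active frog starts at $\emptyset$ at time $0$ and is at $S_j(\emptyset,1)$ at time $j$; a frog activated at time $s$ at $v$ is at $S_j(v,i)$ at time $s+j$; when an active frog is at a vertex with sleeping frogs, all of them activate. $\sigma_{P_\cdot}(\eta,S)$: add an extra frog with path $P_\cdot$ at $P_0$ (nonroot). $\Delta_{P_\cdot}f(\eta,S)=f(\sigma_{P_\cdot}(\eta,S))-f(\eta,S)$. $f$ (valued in $[0,\infty]$) is an icv statistic if for all $(\eta,S)$ and paths $P^1_\cdot,\dots,P^m_\cdot$ with a common start: (i) for $m=1,2$, $(-1)^m\Delta_{P^1_\cdot}\cdots\Delta_{P^m_\cdot}f(\eta,S)\le0$ whenever all values $f(\sigma_{P^{u_1}_\cdot}\cdots\sigma_{P^{u_j}_\cdot}(\eta,S))$, $\{u_1,\dots,u_j\}\subseteq\{1,\dots,m\}$, are finite; (ii) $f(\eta,S)=\infty\Rightarrow f(\sigma_{P^1_\cdot}(\eta,S))=\infty$;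 (iii) $f(\sigma_{P^1_\cdot}\sigma_{P^2_\cdot}(\eta,S))=\infty\Rightarrow f(\sigma_{P^i_\cdot}(\eta,S))=\infty$ for $i=1$ or $2$. $f$ is a pgf statistic if (ii),(iii) hold and (i) holds for all $m\ge1$. $f$ is continuous if $\eta_k(v)\nearrow\eta(v)$ for all $v$ implies $f(\eta_k,S)\nearrow f(\eta,S)$. *)

From HB Require Import structures.
From mathcomp Require Import all_boot all_order all_algebra.
From mathcomp Require Import all_classical all_reals all_analysis.
Set Implicit Arguments. Unset Strict Implicit. Unset Printing Implicit Defensive.
Import Order.TTheory GRing.Theory Num.Theory.
Local Open Scope classical_set_scope.
Local Open Scope ring_scope.

Definition path (V : Type) := nat -> V.

(* A frog-model configuration (eta, S) on the countable vertex set V.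
   eta v = number of sleeping frogs at v (only used for v <> root).
   Frogs at v are indexed by i < eta v (0-based; the paper uses 1..eta v),
   S v i is the path of frog i at v; the initial frog at the root has
   path S root 0 (the paper's S(root,1)). *)
Record config (V : Type) := Config {
  ceta : V -> nat ;
  cS : V -> nat -> path V }.

Definition valid_config (V : Type) (c : config V) : Prop :=
  forall v i, cS c v i 0 = v.

Definition sigma (V : eqType) (P : path V) (c : config V) : config V :=
  Config (fun v => if v == P 0 then (ceta c v).+1 else ceta c v)
         (fun v i => if (v == P 0) && (i == ceta c v) then P else cS c v i).

Definition sigma_seq (V : eqType) (ps : seq (path V)) (c : config V) : config V :=
  foldr (@sigma V) c ps.

(* Dynamics.  hist c t s x  (for s <= t) says that some active frog is at x
   at time s.  Sleeping frogs at a nonroot vertex v are activated at the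
   first time s0 at which v is occupied by an active frog; frog i of v is
   then at S v i j at time s0 + j. *)
Fixpoint hist (V : eqType) (root : V) (c : config V) (t : nat) : nat -> V -> Prop :=
  match t with
  | 0 => fun s x => s = 0%N /\ x = cS c root 0 0
  | t'.+1 =>
      let h := hist root c t' in
      fun s x =>
        ((s <= t')%N /\ h s x) \/
        (s = t'.+1 /\
         (x = cS c root 0 t'.+1 \/
          exists v i s0, [/\ v <> root /\ (i < ceta c v)%N, (s0 <= t')%N,
                            h s0 v, (forall s', (s' < s0)%N -> ~ h s' v) &
                            x = cS c v i (t'.+1 - s0)%N]))
  end.

Definition occupied (V : eqType) (root : V) (c : config V) (s : nat) (x : V) : Prop :=
  hist root c s s x.

(* u is visited by time t (t = None means t = infinity) *)
Definition visited_by (V : eqType) (root : V) (c : config V) (t : option nat) (u : V)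
  : Prop :=
  match t with
  | Some t => exists s, (s <= t)%N /\ occupied root c s u
  | None => exists s, occupied root c s u
  end.

Local Open Scope ereal_scope.

Definition a_u (R : realType) (V : eqType) (root : V) (t : option nat) (u : V)
  (c : config V) : \bar R :=
  if `[< visited_by root c t u >] then 1 else 0.

Definition a_tot (R : realType) (V : choiceType) (root : V) (t : option nat)
  (c : config V) : \bar R :=
  \esum_(v in [set v | v <> root]) a_u R root t v c.

Local Close Scope ereal_scope.

Fixpoint fdiff (R : realType) (V : eqType) (ps : seq (path V)) (g : config V -> R)
  : config V -> R :=
  match ps with
  | [::] => g
  | p :: ps' => fun c => fdiff ps' g (sigma p c) - fdiff ps' g c
  end.

Definition statistic (R : realType) (V : Type) := config V -> \bar R.

Definition common_nonroot_start (V : eqType) (root : V) (ps : seq (path V)) : Prop :=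
  exists x0, x0 <> root /\ all (fun p => p 0 == x0) ps.

Definition cond_i (R : realType) (V : eqType) (root : V) (f : statistic R V)
  (ps : seq (path V)) : Prop :=
  forall c : config V, valid_config c ->
    (forall m : bitseq, f (sigma_seq (mask m ps) c) \is a fin_num) ->
    (-1) ^+ size ps * fdiff ps (fun c' => fine (f c')) c <= 0.

Definition cond_ii (R : realType) (V : eqType) (root : V) (f : statistic R V) : Prop :=
  forall (c : config V) (P : path V), valid_config c -> P 0 <> root ->
    f c = +oo%E -> f (sigma P c) = +oo%E.

Definition cond_iii (R : realType) (V : eqType) (root : V) (f : statistic R V) : Prop :=
  forall (c : config V) (P1 P2 : path V), valid_config c ->
    P1 0 <> root -> P2 0 = P1 0 ->
    f (sigma P1 (sigma P2 c)) = +oo%E ->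
    f (sigma P1 c) = +oo%E \/ f (sigma P2 c) = +oo%E.

Definition nonneg_stat (R : realType) (V : Type) (f : statistic R V) : Prop :=
  forall c, (0 <= f c)%E.

Definition icv_statistic (R : realType) (V : eqType) (root : V) (f : statistic R V)
  : Prop :=
  [/\ nonneg_stat f,
      (forall ps : seq (path V), (size ps = 1 \/ size ps = 2)%N ->
         common_nonroot_start root ps -> cond_i root f ps),
      cond_ii root f & cond_iii root f].

Definition pgf_statistic (R : realType) (V : eqType) (root : V) (f : statistic R V)
  : Prop :=
  [/\ nonneg_stat f,
      (forall ps : seq (path V), (1 <= size ps)%N ->
         common_nonroot_start root ps -> cond_i root f ps),
      cond_ii root f & cond_iii root f].

Definition continuous_stat (R : realType) (V : eqType) (root : V) (f : statistic R V)
  : Prop :=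
  forall (etak : nat -> V -> nat) (eta : V -> nat) (S : V -> nat -> path V),
    (forall v i, S v i 0 = v) ->
    (forall v, v <> root ->
       {homo (fun k => etak k v) : k l / (k <= l)%N >-> (k <= l)%N} /\
       (exists K, forall k, (K <= k)%N -> etak k v = eta v)) ->
    {homo (fun k => f (Config (etak k) S)) : k l / (k <= l)%N >-> (k <= l)%E} /\
    ((fun k => f (Config (etak k) S)) @ \oo --> f (Config eta S)).

(* Relax the dynamics by letting a sleeping frog start its walk from any visit
   of its vertex rather than the first: this changes no first-visit time and is
   evidently monotone in the set of frogs.  The key fact is that for extra frogs
   p, q started at the same nonroot vertex x0, a vertex visited in
   σ_q σ_p(η,S) is already visited in σ_p(η,S) or in σ_q(η,S): until x0 is
   reached nothing changes, and from then on both extra frogs are awake.  So the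
   visit indicator b of a vertex satisfies b∘σ_q∘σ_p = b∘σ_q ∨ b∘σ_p, and by
   induction Δ_{P_1}⋯Δ_{P_m} b = (-1)^{m-1} [¬b ∧ b∘σ_{P_1} ∧ ⋯ ∧ b∘σ_{P_m}],
   which has the sign required in (i).  When a^t is finite on the configurations
   in (i), only finitely many vertices are visited in them, and a^t is a finite
   sum of such indicators there.  Condition (ii) is monotonicity, (iii) follows
   from a^t(σ_{P_1}σ_{P_2}) ≤ a^t(σ_{P_1}) + a^t(σ_{P_2}), and continuity holds
   because each visit uses only finitely many frogs. *)

From Pilot Require Import Defs.
From HB Require Import structures.
From mathcomp Require Import all_boot all_order all_algebra.
From mathcomp Require Import all_classical all_reals all_analysis.
From mathcomp Require Import finmap zify lra.
Set Implicit Arguments. Unset Strict Implicit. Unset Printing Implicit Defensive.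
Import Order.TTheory GRing.Theory Num.Theory.
Local Open Scope classical_set_scope.

Lemma all_In (T : Type) (a : pred T) s x : all a s -> List.In x s -> a x.
Proof. by elim: s => //= y s IH /andP [ay sa] [<-|/IH]; auto. Qed.

Lemma In_mask1 (T : Type) (s : seq T) x : List.In x s -> exists m, mask m s = [:: x].
Proof.
elim: s => [|y s IH] //= [<-|/IH [m sm]]; last by exists (false :: m).
by exists (true :: nseq (size s) false); rewrite /= mask_false.
Qed.

Lemma finite_bigcup_In (T U : Type) (s : seq T) (A : T -> set U) :
  (forall x, List.In x s -> finite_set (A x)) ->
  finite_set (\bigcup_(x in [set x | List.In x s]) A x).
Proof.
elim: s => [|y s IH] finA.
  by apply: sub_finite_set (finite_set0 U) => u [].
apply: (sub_finite_set (B := A y `|` \bigcup_(x in [set x | List.In x s]) A x)).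
  by move=> u [x [<-|xs] Axu]; [left|right; exists x].
rewrite finite_setU; split; first by apply: finA; left.
by apply: IH => x xs; apply: finA; right.
Qed.

Section Reach.
Variables (V : eqType) (root : V).
Implicit Types (c d e : config V) (P p q : Defs.path V).

Definition is_frog c v P := exists2 i, (i < ceta c v)%N & cS c v i = P.

Inductive reach c : nat -> V -> Prop :=
| ReachRoot s : reach c s (cS c root 0 s)
| ReachFrog j s v P : v <> root -> is_frog c v P -> reach c s v ->
    reach c (s + j.+1) (P j.+1).

Lemma hist_occupied c t s x :
  hist root c t s x <-> (s <= t)%N /\ occupied root c s x.
Proof.
elim: t s x => [|t IH] s x.
  split; first by case=> -> ->.
  by case; rewrite leqn0 => /eqP ->.
split.
- case=> [[st /IH [_ o]]|[-> H]]; first by split=> //; exact: leqW.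
  by split=> //; right.
- move=> [st o]; have [le|gt] := leqP s t; first by left; split=> //; apply/IH.
  move: o; have -> : s = t.+1 by apply/eqP; rewrite eqn_leq st gt.
  by rewrite /occupied /= => -[[]|]; [rewrite ltnn|right].
Qed.

Lemma occupied0 c x : occupied root c 0 x <-> x = cS c root 0 0.
Proof. by split; [case|]. Qed.

Lemma occupiedS c t x : occupied root c t.+1 x <-> (x = cS c root 0 t.+1 \/
  exists v i s0, [/\ v <> root /\ (i < ceta c v)%N, (s0 <= t)%N,
     occupied root c s0 v, (forall s', (s' < s0)%N -> ~ occupied root c s' v) &
     x = cS c v i (t.+1 - s0)%N]).
Proof.
split.
- case=> [[]|[_ [->|[v [i [s0 [vi s0t hv first ->]]]]]]]; first by rewrite ltnn.
    by left.
  right; exists v, i, s0; split=> //; first by have /hist_occupied [] := hv.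
  move=> s' lt o; apply: (first s' lt); apply/hist_occupied; split=> //.
  exact: leq_trans (ltnW lt) s0t.
- case=> [->|[v [i [s0 [vi s0t hv first ->]]]]]; right; split=> //; first by left.
  right; exists v, i, s0; split=> //; first exact/hist_occupied.
  by move=> s' lt /hist_occupied [_ o]; apply: (first s' lt).
Qed.

Lemma occupied_reach c s x : occupied root c s x -> reach c s x.
Proof.
elim/ltn_ind: s x => -[|t] IH x; first by move/occupied0 => ->; constructor.
move/occupiedS => [->|[v [i [s0 [[vr vi] s0t hv _ ->]]]]]; first by constructor.
have -> : t.+1 = s0 + (t - s0).+1 by lia.
have -> : (s0 + (t - s0).+1 - s0 = (t - s0).+1)%N by lia.
by apply: (ReachFrog _ vr); [exists i | apply: IH => //; lia].
Qed.

Lemma reach_occupied c s x :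
  reach c s x -> exists2 s', (s' <= s)%N & occupied root c s' x.
Proof.
elim=> [{}s|j s0 v P vr [i vi <-] _ [s1 le1 o1]].
  by exists s => //; case: s => [|t]; [apply/occupied0 | apply/occupiedS; left].
have ex_v : exists n, `[< occupied root c n v >] by exists s1; exact: asboolT.
have [T /asboolP oT minT] := ex_minnP ex_v.
have T_s1 : (T <= s1)%N by apply: minT; exact/asboolP.
exists (T + j.+1); first by lia.
rewrite addnS; apply/occupiedS; right; exists v, i, T; split=> //.
- exact: leq_addr.
- by move=> s' lt o; have := minT s' (asboolT o); lia.
- by congr (cS c v i _); lia.
Qed.

Definition before (t : option nat) (s : nat) : bool :=
  if t is Some t then (s <= t)%N else true.

Lemma before_le t s s' : (s' <= s)%N -> before t s -> before t s'.
Proof. by case: t => //= t; exact: leq_trans. Qed.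

Lemma visited_byP c t u :
  visited_by root c t u <-> exists2 s, before t s & reach c s u.
Proof.
split.
- by case: t => [t [s [st /occupied_reach]]|[s /occupied_reach]]; exists s.
- move=> [s st /reach_occupied [s' le o]].
  by case: t st => [t st|_]; exists s' => //; split=> //; exact: leq_trans st.
Qed.

Definition subconfig c d := cS d root 0 = cS c root 0 /\
  forall v P, v <> root -> is_frog c v P -> is_frog d v P.

Lemma subconfig_trans c d e : subconfig c d -> subconfig d e -> subconfig c e.
Proof.
move=> [r1 f1] [r2 f2]; split; first by rewrite r2.
by move=> v P vr /(f1 v P vr); exact: f2.
Qed.

Lemma reach_subconfig c d s x : subconfig c d -> reach c s x -> reach d s x.
Proof.
move=> [r f]; elim=> {s x} [s|j s v P vr fr _ IH]; first by rewrite -r; constructor.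
exact: (ReachFrog j vr (f v P vr fr) IH).
Qed.

Lemma visited_by_subconfig c d t u :
  subconfig c d -> visited_by root c t u -> visited_by root d t u.
Proof.
move=> cd /visited_byP [s st rs]; apply/visited_byP; exists s => //.
exact: reach_subconfig cd rs.
Qed.

Lemma is_frog_sigma P c v Q :
  is_frog (sigma P c) v Q <-> (v = P 0 /\ Q = P) \/ is_frog c v Q.
Proof.
split.
- move=> [i /=]; case: eqVneq => [->|nvP] /=; last by right; exists i.
  rewrite ltnS leq_eqVlt => /orP [/eqP ->|li]; first by rewrite eqxx => <-; left.
  by rewrite (ltn_eqF li) => <-; right; exists i.
- case=> [[-> ->]|[i li <-]]; first by exists (ceta c (P 0)); rewrite /= !eqxx.
  exists i; last by rewrite /= (ltn_eqF li) andbF.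
  by rewrite /=; case: ifP => // _; exact: ltnW.
Qed.

Lemma sigma_root P c : P 0 <> root -> cS (sigma P c) root 0 = cS c root 0.
Proof. by move=> Pr /=; case: eqP => // rP; case: Pr. Qed.

Lemma subconfig_sigma P c : P 0 <> root -> subconfig c (sigma P c).
Proof.
by move=> Pr; split=> [|v Q _ fr]; [exact: sigma_root | apply/is_frog_sigma; right].
Qed.

Lemma subconfig_sigma2 q c d :
  q 0 <> root -> subconfig c d -> subconfig (sigma q c) (sigma q d).
Proof.
move=> qr [r f]; split; first by rewrite !sigma_root.
move=> v P vr /is_frog_sigma [new|/(f v P vr) fd]; apply/is_frog_sigma; by [left|right].
Qed.

Definition extends_at x0 c d := subconfig c d /\
  forall v P, v <> root -> v <> x0 -> is_frog d v P -> is_frog c v P.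

Lemma extends_at_trans x0 c d e :
  extends_at x0 c d -> extends_at x0 d e -> extends_at x0 c e.
Proof.
move=> [cd f1] [de f2]; split; first exact: subconfig_trans de.
by move=> v P vr vx /(f2 v P vr vx); exact: f1.
Qed.

Lemma extends_at_sigma P c : P 0 <> root -> extends_at (P 0) c (sigma P c).
Proof.
move=> Pr; split=> [|v Q vr vP /is_frog_sigma [[]//|//]]; exact: subconfig_sigma.
Qed.

Lemma reach_extends_at x0 c e s x : extends_at x0 c e -> reach e s x ->
  reach c s x \/ exists2 r, (r < s)%N & reach c r x0.
Proof.
move=> [[r f] fx]; elim=> {s x} [s|j s v P vr fr _ [rc|[r' rs rr]]].
- by left; rewrite r; constructor.
- have [vx|/eqP vx] := eqVneq v x0.
    by right; exists s; rewrite -?vx // addnS ltnS leq_addr.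
  by left; exact: (ReachFrog j vr (fx v P vr vx fr) rc).
- by right; exists r' => //; rewrite addnS ltnS ltnW // ltn_addr.
Qed.

Lemma reach_sigma_extends x0 c d q s x : x0 <> root -> q 0 = x0 ->
  extends_at x0 c d -> reach (sigma q d) s x ->
  exists2 s', (s' <= s)%N & reach d s' x \/ reach (sigma q c) s' x.
Proof.
move=> xr q0 cd; have qr : q 0 <> root by rewrite q0.
have cqd : extends_at x0 c (sigma q d).
  by apply: extends_at_trans cd _; rewrite -q0; exact: extends_at_sigma.
have [c_qc c_d] := (subconfig_sigma c qr, cd.1).
elim=> {s x} [s|j s v P vr fr rv IH].
  by exists s => //; left; rewrite sigma_root //; constructor.
have [vx|/eqP vx] := eqVneq v x0.
- have [r rs rc] : exists2 r, (r <= s)%N & reach c r x0.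
    case: (reach_extends_at cqd rv) => [|[r /ltnW]]; last by exists r.
    by rewrite vx; exists s.
  exists (r + j.+1); first by rewrite leq_add2r.
  move: fr; rewrite vx => /is_frog_sigma [[_ ->]|fd].
    right; apply: (ReachFrog j xr _ (reach_subconfig c_qc rc)).
    by apply/is_frog_sigma; left.
  by left; exact: (ReachFrog j xr fd (reach_subconfig c_d rc)).
- have fc := cqd.2 v P vr vx fr.
  have [s' s's [rd|rq]] := IH; exists (s' + j.+1); rewrite ?leq_add2r //.
    by left; exact: (ReachFrog j vr (c_d.2 v P vr fc) rd).
  by right; exact: (ReachFrog j vr (c_qc.2 v P vr fc) rq).
Qed.

Lemma visited_by_sigma c p t u : p 0 <> root ->
  visited_by root c t u -> visited_by root (sigma p c) t u.
Proof. by move=> pr; apply/visited_by_subconfig/subconfig_sigma. Qed.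

Lemma visited_by_sigma2 x0 c p q t u : x0 <> root -> p 0 = x0 -> q 0 = x0 ->
  visited_by root (sigma q (sigma p c)) t u <->
  visited_by root (sigma q c) t u \/ visited_by root (sigma p c) t u.
Proof.
move=> xr p0 q0; split.
- have cpc : extends_at x0 c (sigma p c).
    by rewrite -p0; apply: extends_at_sigma; rewrite p0.
  move=> /visited_byP [s st /(reach_sigma_extends xr q0 cpc) [s' s's rs]].
  by case: rs => rs; [right|left]; apply/visited_byP; exists s' => //; exact: before_le st.
- have [pr qr] : p 0 <> root /\ q 0 <> root by rewrite p0 q0.
  case; apply: visited_by_subconfig; last exact: subconfig_sigma.
  exact: subconfig_sigma2 qr (subconfig_sigma c pr).
Qed.
End Reach.

Section IndicatorDifferences.
Variables (R : realType) (V : eqType) (x0 : V) (b : config V -> bool).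
Implicit Types (p q : Defs.path V) (c : config V).
Hypothesis b_sigma : forall p c, p 0 = x0 -> b c -> b (sigma p c).
Hypothesis b_sigma2 : forall p q c, p 0 = x0 -> q 0 = x0 ->
  b (sigma q (sigma p c)) = b (sigma q c) || b (sigma p c).
Local Open Scope ring_scope.

Let ind (c : config V) : R := (b c)%:R.

Lemma fdiff_indicator p ps c : p 0 = x0 -> all (fun q => q 0 == x0) ps ->
  fdiff (p :: ps) ind c =
  (-1) ^+ size ps * (~~ b c && b (sigma p c) && all (fun q => b (sigma q c)) ps)%:R.
Proof.
elim: ps p c => [|q ps IH] p c p0 => [_|/andP [/eqP q0 ps0]].
  rewrite /= expr0 mul1r andbT /ind; have := @b_sigma p c p0.
  by case: (b c); case: (b (sigma p c)) => //= h; rewrite ?subrr ?subr0 //; have := h isT.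
have -> : fdiff [:: p, q & ps] ind c =
  fdiff (q :: ps) ind (sigma p c) - fdiff (q :: ps) ind c by [].
rewrite !IH // exprS; have := @b_sigma p c p0; case bp: (b (sigma p c)) => /= bc.
  by rewrite mulr0 sub0r andbT andbA mulN1r mulNr.
have -> : b c = false by apply/negbTE/negP => /bc.
rewrite andbF mulr0 /= b_sigma2 // bp orbF.
rewrite (@eq_in_all _ _ (fun r => b (sigma r c))) ?subrr //.
by move=> r /(allP ps0) /eqP r0; rewrite b_sigma2 // bp orbF.
Qed.

Lemma fdiff_indicator_sign ps c : (0 < size ps)%N -> all (fun q => q 0 == x0) ps ->
  (-1) ^+ size ps * fdiff ps ind c <= 0.
Proof.
case: ps => [|p ps] // _ /andP [/eqP p0 ps0]; rewrite fdiff_indicator //.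
rewrite exprS -signr_odd; case: (odd _); case: (_ && _); rewrite /= ?expr0 ?expr1; lra.
Qed.

End IndicatorDifferences.

Fixpoint diff_family (V : eqType) (ps : seq (Defs.path V)) (c d : config V) : Prop :=
  if ps is p :: ps then diff_family ps (sigma p c) d \/ diff_family ps c d else d = c.

Lemma eq_fdiff_family (R : realType) (V : eqType) ps (g g' : config V -> R) c :
  (forall d, diff_family ps c d -> g d = g' d) -> fdiff ps g c = fdiff ps g' c.
Proof.
elim: ps c => [|p ps IH] c /= gg'; first exact: gg'.
by rewrite (IH (sigma p c)) ?(IH c) // => d fd; apply: gg'; [right|left].
Qed.

Lemma fdiff_sum (R : realType) (V : eqType) (I : Type) ps (s : seq I)
    (G : I -> config V -> R) c :
  fdiff ps (fun d => \sum_(i <- s) G i d)%R c = (\sum_(i <- s) fdiff ps (G i) c)%R.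
Proof. by elim: ps c => [|p ps IH] c //=; rewrite !IH -sumrB. Qed.

Definition visitedb (V : eqType) (root : V) t u (c : config V) : bool :=
  `[< visited_by root c t u >].

Definition visited_set (V : eqType) (root : V) t (c : config V) : set V :=
  [set v | v <> root /\ visited_by root c t v].

Lemma family_visited (V : eqType) (root x0 : V) t ps c d :
  x0 <> root -> all (fun p => p 0 == x0) ps -> diff_family ps c d ->
  visited_set root t d `<=` visited_set root t c `|`
    \bigcup_(p in [set p | List.In p ps]) visited_set root t (sigma p c).
Proof.
move=> xr; elim: ps c => [|p ps IH] c /=; first by move=> _ -> v; left.
move=> /andP [/eqP p0 psx] [fd|fd] v /(IH _ psx fd) [vc|[q qps [vr vq]]].
- by right; exists p; [left|].
- have q0 := eqP (all_In psx qps).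
  move: vq => /(visited_by_sigma2 _ _ _ xr p0 q0) [vq|vp]; right; [exists q|exists p] => //.
    by right.
  by left.
- by left.
- by right; exists q; [right|].
Qed.

Lemma visitedb_sigma2 (V : eqType) (root x0 : V) t u c p q :
  x0 <> root -> p 0 = x0 -> q 0 = x0 ->
  visitedb root t u (sigma q (sigma p c)) =
  visitedb root t u (sigma q c) || visitedb root t u (sigma p c).
Proof.
move=> xr p0 q0; rewrite /visitedb -asbool_or.
exact/asbool_equiv_eq/(visited_by_sigma2 _ _ _ xr p0 q0).
Qed.

Section VisitIndicator.
Variables (R : realType) (V : eqType) (root : V) (t : option nat) (u : V).
Local Open Scope ring_scope.

Lemma visitedb_fdiff_sign ps c :
  (0 < size ps)%N -> common_nonroot_start root ps ->
  (-1) ^+ size ps * fdiff ps (fun d => (visitedb root t u d)%:R : R) c <= 0.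
Proof.
move=> ps0 [x0 [xr psx]]; apply: fdiff_indicator_sign psx => // [p d p0|p q d p0 q0].
  by move=> /asboolP vd; apply/asboolP; apply: visited_by_sigma vd; rewrite p0.
exact: (visitedb_sigma2 _ _ _ xr p0 q0).
Qed.

Lemma a_uE c : a_u R root t u c = ((visitedb root t u c)%:R)%:E.
Proof. by rewrite /a_u /visitedb; case: ifP. Qed.

Lemma a_u_le c d : subconfig root c d -> (a_u R root t u c <= a_u R root t u d)%E.
Proof.
move=> cd; rewrite !a_uE lee_fin ler_nat /visitedb.
by case: asboolP => // /(visited_by_subconfig cd) /asboolT ->.
Qed.

Lemma a_u_pgf : pgf_statistic root (@a_u R V root t u).
Proof.
split=> [c|ps ps0 hps c _ _|c P _ _|c P1 P2 _ _ _]; try by rewrite a_uE.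
have -> : (fun d => fine (a_u R root t u d)) = (fun d => (visitedb root t u d)%:R).
  by apply/funext => d; rewrite a_uE.
exact: visitedb_fdiff_sign.
Qed.

End VisitIndicator.

Section TotalVisits.
Variables (R : realType) (V : choiceType) (root : V) (t : option nat).
Local Notation a_tot := (@a_tot R V root t).
Local Open Scope ereal_scope.

Lemma a_tot_ge0 c : 0 <= a_tot c.
Proof. by apply: esum_ge0 => v _; rewrite a_uE. Qed.

Lemma a_tot_le c d : subconfig root c d -> a_tot c <= a_tot d.
Proof. by move=> cd; apply: le_esum => v _; exact: a_u_le. Qed.

Lemma a_tot_finite_visited d : a_tot d \is a fin_num -> finite_set (visited_set root t d).
Proof.
move=> fin; apply: contrapT => inf.
have [B BS szB] := infinite_set_fset (Num.trunc (fine (a_tot d))).+1 inf.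
have : ((#|` B|)%:R : R)%:E <= a_tot d.
  apply: esum_ge; exists [set` B]; first by split; [exact: finite_fset | move=> v /BS []].
  rewrite -fsbig_seq ?fset_uniq // big_seq (eq_bigr (fun=> 1%:E)) -?big_seq.
    by rewrite sumEFin lee_fin -sum1_size natr_sum.
  by move=> v /BS [_ vv]; rewrite a_uE /visitedb asboolT.
rewrite -(fineK fin) lee_fin => le_B.
have := truncnS_gt (fine (a_tot d)); rewrite -(ler_nat R) in szB; lra.
Qed.

Lemma a_tot_sum d (s : seq V) : uniq s -> [set` s] `<=` [set v | v <> root] ->
  visited_set root t d `<=` [set` s] ->
  a_tot d = (\sum_(v <- s) (visitedb root t v d)%:R)%:E.
Proof.
move=> us sr ds; rewrite /Defs.a_tot (esumID [set` s]); last by move=> v _; rewrite a_uE.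
rewrite [X in _ + X]esum1 ?adde0; last first.
  by move=> v [vr vs]; rewrite a_uE /visitedb asboolF // => vd; apply/vs/ds.
rewrite setIidr // esum_fset //; last by move=> v _; rewrite a_uE.
by rewrite -fsbig_seq // -sumEFin; apply: eq_bigr => v _; rewrite a_uE.
Qed.

Lemma a_tot_cond_i ps : (0 < size ps)%N -> common_nonroot_start root ps ->
  cond_i root a_tot ps.
Proof.
move=> ps0 [x0 [xr psx]] c _ fin.
pose U := visited_set root t c `|`
  \bigcup_(p in [set p | List.In p ps]) visited_set root t (sigma p c).
have finU : finite_set U.
  rewrite finite_setU; split.
    by apply: a_tot_finite_visited; have := fin (nseq (size ps) false); rewrite mask_false.
  apply: finite_bigcup_In => p pps; have [m pm] := In_mask1 pps.
  by apply: a_tot_finite_visited; have := fin m; rewrite pm.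
have Ur : [set` fset_set U] `<=` [set v | v <> root].
  by move=> v /=; rewrite in_fset_set // => /set_mem [[]|[p _ []]].
rewrite (eq_fdiff_family
  (g' := fun d => \sum_(v <- fset_set U) (visitedb root t v d)%:R : R)%R).
  rewrite fdiff_sum mulr_sumr; apply: sumr_le0 => v _.
  by apply: visitedb_fdiff_sign => //; exists x0.
move=> d fd; rewrite (a_tot_sum (fset_uniq _) Ur) // => v /(family_visited xr psx fd) Uv.
by rewrite /= in_fset_set //; apply: mem_set.
Qed.

Lemma a_tot_subadditive c P1 P2 : P1 0%N <> root -> P2 0%N = P1 0%N ->
  a_tot (sigma P1 (sigma P2 c)) <= a_tot (sigma P1 c) + a_tot (sigma P2 c).
Proof.
move=> P1r P21; rewrite /Defs.a_tot -esumD => [|v _|v _]; rewrite ?a_uE //.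
apply: le_esum => v _; rewrite !a_uE -EFinD lee_fin.
rewrite (visitedb_sigma2 _ _ _ P1r P21 erefl).
by case: (visitedb _ _ _ _); case: (visitedb _ _ _ _) => /=; lra.
Qed.

Lemma a_tot_pgf : pgf_statistic root a_tot.
Proof.
split=> [c|ps|c P _ Pr|c P1 P2 _ P1r P21]; first exact: a_tot_ge0.
- exact: a_tot_cond_i.
- by move=> ainf; apply/eqP; rewrite -leye_eq -ainf; exact/a_tot_le/subconfig_sigma.
move=> ainf; have := a_tot_subadditive c P1r P21; rewrite ainf leye_eq.
have := a_tot_ge0 (sigma P1 c); have := a_tot_ge0 (sigma P2 c).
by case: (a_tot (sigma P1 c)) => [x| |]; case: (a_tot (sigma P2 c)) => [y| |]; auto.
Qed.

End TotalVisits.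

Section Continuity.
Variables (V : eqType) (root : V) (etak : nat -> V -> nat) (eta : V -> nat)
  (S : V -> nat -> Defs.path V).
Hypothesis etak_lim : forall v, v <> root ->
  {homo (fun k => etak k v) : k l / (k <= l)%N >-> (k <= l)%N} /\
  (exists K, forall k, (K <= k)%N -> etak k v = eta v).

Local Notation cfg k := (Config (etak k) S).

Lemma subconfig_etak k l : (k <= l)%N -> subconfig root (cfg k) (cfg l).
Proof.
move=> kl; split=> // v P vr [i ik iP]; exists i => //.
by have [mono _] := etak_lim vr; exact: leq_trans ik (mono _ _ kl).
Qed.

Lemma subconfig_etak_lim k : subconfig root (cfg k) (Config eta S).
Proof.
split=> // v P vr [i ik iP]; exists i => //.
have [mono [K etaK]] := etak_lim vr; rewrite /= -(etaK (maxn k K)) ?leq_maxr //.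
exact: leq_trans ik (mono _ _ (leq_maxl _ _)).
Qed.

Lemma reach_etak s x : reach root (Config eta S) s x ->
  exists K, forall k, (K <= k)%N -> reach root (cfg k) s x.
Proof.
elim=> {s x} [s|j s v P vr [i ik iP] _ [K1 reach1]].
  by exists 0%N => k _; exact: ReachRoot.
have [_ [K2 etaK]] := etak_lim vr.
exists (maxn K1 K2) => k; rewrite geq_max => /andP [K1k K2k].
apply: (ReachFrog j vr _ (reach1 k K1k)); exists i => //; by rewrite /= etaK.
Qed.

Lemma visited_by_etak t u : visited_by root (Config eta S) t u ->
  exists K, forall k, (K <= k)%N -> visited_by root (cfg k) t u.
Proof.
move=> /visited_byP [s st /reach_etak [K reachK]]; exists K => k Kk.
by apply/visited_byP; exists s => //; exact: reachK.
Qed.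

Lemma visited_by_etak_seq t (s : seq V) : exists K, forall v, v \in s ->
  visited_by root (Config eta S) t v -> visited_by root (cfg K) t v.
Proof.
elim: s => [|w s [K visK]]; first by exists 0%N.
have [/visited_by_etak [K' visK']|nw] := pselect (visited_by root (Config eta S) t w).
  exists (maxn K K') => v; rewrite inE => /orP [/eqP -> _|vs /(visK v vs)].
    exact: visK' (leq_maxr _ _).
  exact/visited_by_subconfig/subconfig_etak/leq_maxl.
by exists K => v; rewrite inE => /orP [/eqP -> //|]; exact: visK.
Qed.

End Continuity.

Section ContinuousStatistics.
Variables (R : realType) (t : option nat).
Local Open Scope ereal_scope.

Lemma a_u_continuous (V : eqType) (root u : V) :
  continuous_stat root (@a_u R V root t u).
Proof.
move=> etak eta S _ lim; split=> [k l kl|].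
  by apply: a_u_le; exact (subconfig_etak S lim kl).
apply: cvg_near_cst; rewrite /a_u.
have [vis|nvis] := pselect (visited_by root (Config eta S) t u).
  have [K visK] := visited_by_etak lim vis.
  by exists K => // k /= /visK vk; rewrite !asboolT.
exists 0%N => // k _ /=; rewrite (asboolF nvis) asboolF // => vk.
exact/nvis/(visited_by_subconfig (subconfig_etak_lim S lim k) vk).
Qed.

Lemma a_tot_continuous (V : choiceType) (root : V) :
  continuous_stat root (@a_tot R V root t).
Proof.
move=> etak eta S _ lim.
have mono : nondecreasing_seq (fun k => a_tot R root t (Config (etak k) S)).
  by move=> k l kl; apply: a_tot_le; exact (subconfig_etak S lim kl).
split=> //; suff -> : a_tot R root t (Config eta S) =
    ereal_sup (range (fun k => a_tot R root t (Config (etak k) S))).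
  exact: ereal_nondecreasing_cvgn.
apply/eqP; rewrite eq_le; apply/andP; split; last first.
  by apply: ge_ereal_sup => _ [k _ <-]; apply: a_tot_le; exact (subconfig_etak_lim S lim k).
apply: ge_ereal_sup => _ [X [finX XD] <-]; move/finite_seqP: (finX) => [s Xs].
have [K visK] := visited_by_etak_seq S lim t s.
apply: (@le_trans _ _ (a_tot R root t (Config (etak K) S))); last first.
  by apply: ereal_sup_ubound; exists K.
apply: (@le_trans _ _ (\sum_(v \in X) a_u R root t v (Config (etak K) S))%R).
  apply: lee_fsum => // v; rewrite Xs /a_u => vs.
  case: ifPn => [/asboolP /(visK v vs) vK|_]; first by rewrite asboolT.
  by case: ifP.
by apply: esum_ge; exists X.
Qed.

End ContinuousStatistics.

Lemma pgf_icv_statistic (R : realType) (V : eqType) (root : V) (f : statistic R V) :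
  pgf_statistic root f -> icv_statistic root f.
Proof. by case=> f0 fi fii fiii; split=> // ps ps12; apply: fi; case: ps12 => ->. Qed.

Theorem proposition21 (R : realType) (V : countType) (root : V) :
  forall t : option nat,
    (forall u : V, u <> root ->
       let f := @a_u R V root t u in
       [/\ continuous_stat root f, icv_statistic root f & pgf_statistic root f]) /\
    (let f := @a_tot R V root t in
     [/\ continuous_stat root f, icv_statistic root f & pgf_statistic root f]).
Proof.
move=> t; split=> [u _|] /=; split.
- exact: a_u_continuous.
- exact/pgf_icv_statistic/a_u_pgf.
- exact: a_u_pgf.
- exact: a_tot_continuous.
- exact/pgf_icv_statistic/a_tot_pgf.
- exact: a_tot_pgf.
Qed.
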